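(* Let $X$ and $Y$ be bounded degree simplicial complexes and suppose there is some $k$ such that $\mathrm{con}^k_{X\to Y}(r)<+\infty$ for every $r$. Then for each $q\geq 1$ and every $r$, \[ {}_s\mathrm{TO}^q_X(r)\leq k\,{}_s\mathrm{TO}^q_Y\big(\mathrm{con}^k_{X\to Y}(r)\big). \]
   Context: Simplicial complexes are topological realisations of abstract simplicial complexes with countably many $0$-simplices and bounded degree; for a subcomplex $Z$, $|Z|$ denotes its number of $0$-simplices, and $\mathcal{C}Z$ denotes its set of closed simplices. For a finite complex $Z$ and continuous $f:Z\to\mathbb{R}^q$, ${}_s\mathrm{Ov}(f)=\max_{z\in\mathbb{R}^q}|\{\sigma\in\mathcal{C}Z : z\in f(\sigma)\}|$, ${}_s\mathrm{TO}^q(Z)=\min_f {}_s\mathrm{Ov}(f)$ over continuous $f:Z\to\mathbb{R}^q$, and ${}_s\mathrm{TO}^q_X(r)=\max\{{}_s\mathrm{TO}^q(Z): Z \text{ a subcomplex of } X,\ |Z|\leq r\}$. A continuous map $f:Z\to Y$ from a finite complex $Z$ is a $k$-coarse construction if $f$ maps the $\ell$-skeleton of $Z$ into the $\ell$-skeleton of $Y$ for every $\ell$, and every closed simplex of $Y$ meets the images of at most $k$ closed simplices of $Z$. Its volume is the minimal number of $0$-simplices in a subcomplex of $Y$ containing its image. $\mathrm{con}^k_{X\to Y}(r)$ is the maximum, over subcomplexes $Z$ of $X$ with $|Z|\leq r$, of the minimal volume of a $k$-coarse construction $Z\to Y$ (or $+\infty$ if none exists). *)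

From HB Require Import structures.
From mathcomp Require Import all_boot all_order all_algebra.
From mathcomp Require Import finmap.
From mathcomp Require Import boolp reals.
From mathcomp Require classical_sets.
Set Implicit Arguments. Unset Strict Implicit. Unset Printing Implicit Defensive.
Import Order.TTheory GRing.Theory Num.Theory.
Local Open Scope fset_scope.
Local Open Scope ring_scope.

(** Generic (classical) maximum / minimum of a set of naturals.
    nat_max P is the largest element of P when P has one (i.e. P is
    nonempty and bounded); nat_min P is the least element of P when P is
    nonempty.  (Default value 0 otherwise; all uses below are on sets where
    the extremum exists.) *)
Definition nat_max (P : nat -> Prop) : nat :=
  classical_sets.xget 0%N (fun n => P n /\ forall m, P m -> (m <= n)%N).
Definition nat_min (P : nat -> Prop) : nat :=
  classical_sets.xget 0%N (fun n => P n /\ forall m, P m -> (n <= m)%N).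

Definition is_complex (X : {fset nat} -> Prop) : Prop :=
  (forall s, X s -> s != fset0) /\
  (forall s t, X s -> fsubset t s -> t != fset0 -> X t).

Definition bounded_degree (X : {fset nat} -> Prop) : Prop :=
  exists D : nat, forall (v : nat) (l : seq {fset nat}),
    uniq l -> (forall s, s \in l -> X s /\ v \in s) -> (size l <= D)%N.

Definition bd_complex (X : {fset nat} -> Prop) : Prop :=
  is_complex X /\ bounded_degree X.

Definition subcomplex (Z : {fset {fset nat}}) (X : {fset nat} -> Prop) : Prop :=
  is_complex (fun s => s \in Z) /\ (forall s, s \in Z -> X s).

Definition is_vertex (s : {fset nat}) : bool := (#|` s| == 1)%N.
Definition nverts (Z : {fset {fset nat}}) : nat :=
  #|` [fset s in Z | is_vertex s]|.

Section Realisation.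
Variable R : realType.

(** Points of the topological realisation are barycentric-coordinate functions
    x : nat -> R.  x lies in the closed simplex s iff its coordinates are
    nonnegative, vanish off s, and sum to 1. *)
Definition in_simplex (s : {fset nat}) (x : nat -> R) : Prop :=
  (forall i, 0 <= x i) /\ (forall i, i \notin s -> x i = 0) /\
  \sum_(i <- s) x i = 1.

Definition realis (X : {fset nat} -> Prop) (x : nat -> R) : Prop :=
  exists s, X s /\ in_simplex s x.

(** Continuity on a subset A of the realisation, for the sup metric on
    barycentric coordinates (this is the usual topology for locally finite,
    in particular bounded degree, complexes); the target is J -> R with the
    sup metric (J = nat for complexes, J = 'I_q for R^q). *)
Definition cont_on {J : Type} (A : (nat -> R) -> Prop) (f : (nat -> R) -> J -> R)
  : Prop :=
  forall x, A x -> forall eps : R, 0 < eps -> exists2 delta : R, 0 < delta &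
    forall y, A y -> (forall i, `|x i - y i| < delta) ->
      forall j, `|f x j - f y j| < eps.

Definition nb_cover (q : nat) (Z : {fset {fset nat}}) (f : (nat -> R) -> 'I_q -> R)
  (z : 'I_q -> R) : nat :=
  #|` [fset s in Z | `[< exists x, in_simplex s x /\ f x = z >] ]|.

Definition sOv (q : nat) (Z : {fset {fset nat}}) (f : (nat -> R) -> 'I_q -> R) : nat :=
  nat_max (fun n => exists z, n = nb_cover Z f z).

Definition sTO (q : nat) (Z : {fset {fset nat}}) : nat :=
  nat_min (fun n => exists f : (nat -> R) -> 'I_q -> R,
    cont_on (realis (fun s => s \in Z)) f /\ n = sOv Z f).

Definition sTOX (q : nat) (X : {fset nat} -> Prop) (r : nat) : nat :=
  nat_max (fun n => exists Z, subcomplex Z X /\ (nverts Z <= r)%N /\ n = sTO q Z).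

Definition coarse_construction (k : nat) (Z : {fset {fset nat}})
  (Y : {fset nat} -> Prop) (f : (nat -> R) -> nat -> R) : Prop :=
  (forall x, realis (fun s => s \in Z) x -> realis Y (f x)) /\
  cont_on (realis (fun s => s \in Z)) f /\
  (forall (l : nat) x,
     (exists s, s \in Z /\ (#|` s| <= l.+1)%N /\ in_simplex s x) ->
     exists t, Y t /\ (#|` t| <= l.+1)%N /\ in_simplex t (f x)) /\
  (forall t, Y t ->
     (#|` [fset s in Z | `[< exists x, in_simplex s x /\ in_simplex t (f x) >] ]|
       <= k)%N).

Definition volume (Z : {fset {fset nat}}) (Y : {fset nat} -> Prop)
  (f : (nat -> R) -> nat -> R) : nat :=
  nat_min (fun n => exists W, subcomplex W Y /\
    (forall x, realis (fun s => s \in Z) x -> realis (fun s => s \in W) (f x)) /\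
    n = nverts W).

Definition min_con_vol (k : nat) (Z : {fset {fset nat}}) (Y : {fset nat} -> Prop) : nat :=
  nat_min (fun n => exists f, coarse_construction k Z Y f /\ n = volume Z Y f).

(** con^k_{X -> Y}(r), with None standing for +infinity: it is finite iff every
    subcomplex Z of X with |Z| <= r admits a k-coarse construction into Y and
    the minimal volumes of these are bounded; then it is their maximum. *)
Definition con_set (k : nat) (X Y : {fset nat} -> Prop) (r : nat) (n : nat) : Prop :=
  exists Z, subcomplex Z X /\ (nverts Z <= r)%N /\ n = min_con_vol k Z Y.

Definition con (k : nat) (X Y : {fset nat} -> Prop) (r : nat) : option nat :=
  if `[< (forall Z, subcomplex Z X -> (nverts Z <= r)%N ->
            exists f, coarse_construction k Z Y f) /\
         (exists B, forall n, con_set k X Y r n -> (n <= B)%N) >]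
  then Some (nat_max (con_set k X Y r)) else None.

End Realisation.

(* Let Z be a subcomplex of X with |Z| <= r and f : Z -> Y a k-coarse
   construction of minimal volume.  Since |Z| is compact and Y has bounded
   degree, the image of f lies in a finite subcomplex W of Y, which can be
   chosen with at most con(r) vertices.  For an optimal g : W -> R^q, a point
   z lies in g(t) for at most Ov(g) simplices t of W, and each such t meets the
   images of at most k simplices of Z; hence Ov(g o f) <= k Ov(g), i.e.
   TO(Z) <= k TO(W) <= k TO_Y(con(r)). *)

From HB Require Import structures.
From mathcomp Require Import all_boot all_order all_algebra.
From mathcomp Require Import finmap.
From mathcomp Require Import boolp reals classical_sets topology normedtype.
Import Order.TTheory GRing.Theory Num.Theory.
Import numFieldNormedType.Exports.
Set Implicit Arguments. Unset Strict Implicit.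
Local Open Scope fset_scope.

(* [compact_cover] is stated for pointed spaces. *)
HB.instance Definition _ (R : realType) := isPointed.Build {ptws nat -> R} (fun=> 0%R).

Section NatExtrema.
Variable P : nat -> Prop.

Lemma nat_min_spec : (exists n, P n) ->
  P (nat_min P) /\ forall m, P m -> (nat_min P <= m)%N.
Proof.
move=> [n Pn]; have exP : exists n, `[< P n >] by exists n; apply/asboolP.
case: (ex_minnP exP) => m /asboolP Pm minm.
apply: (@xgetPex _ 0%N (fun n => P n /\ forall m, P m -> (n <= m)%N)).
by exists m; split => // j /asboolP /minm.
Qed.

Lemma nat_min_mem : (exists n, P n) -> P (nat_min P).
Proof. by case/nat_min_spec. Qed.

Lemma nat_min_le n : P n -> (nat_min P <= n)%N.
Proof. by move=> Pn; apply: (nat_min_spec (ex_intro _ n Pn)).2. Qed.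

Lemma nat_max_ge n : (exists B, forall m, P m -> (m <= B)%N) -> P n ->
  (n <= nat_max P)%N.
Proof.
move=> [B leB] Pn; have exP : exists n, `[< P n >] by exists n; apply/asboolP.
have leB' m : `[< P m >] -> (m <= B)%N by move/asboolP/leB.
case: (ex_maxnP exP leB') => m /asboolP Pm maxm.
suff [_ /(_ n Pn)] : P (nat_max P) /\ forall j, P j -> (j <= nat_max P)%N by [].
apply: (@xgetPex _ 0%N (fun n => P n /\ forall j, P j -> (j <= n)%N)).
by exists m; split => // j /asboolP /maxm.
Qed.

Lemma nat_min_cases : nat_min P = 0%N \/ P (nat_min P).
Proof.
have [[n minn]|nomin] := pselect (exists n, P n /\ forall m, P m -> (n <= m)%N).
  by right; case: (@xgetPex _ 0%N (fun n => P n /\ _) (ex_intro _ n minn)).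
by left; apply: xgetPN => n minn; apply: nomin; exists n.
Qed.

Lemma nat_max_cases : nat_max P = 0%N \/ P (nat_max P).
Proof.
have [[n maxn]|nomax] := pselect (exists n, P n /\ forall m, P m -> (m <= n)%N).
  by right; case: (@xgetPex _ 0%N (fun n => P n /\ _) (ex_intro _ n maxn)).
by left; apply: xgetPN => n maxn; apply: nomax; exists n.
Qed.

End NatExtrema.

Lemma card_bigfcup_le (I T : choiceType) (A : {fset I}) (F : I -> {fset T}) c :
  (forall a, a \in A -> (#|` F a| <= c)%N) ->
  (#|` \bigcup_(a <- A) F a| <= #|` A| * c)%N.
Proof.
move=> leFc; apply: (@leq_trans (\sum_(a <- A) #|` F a|)).
  elim/big_ind2: _ => // m B n C leBm leCn.
  exact: leq_trans (leq_card_fsetU B C) (leq_add leBm leCn).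
rewrite -sum1_size big_distrl big_seq [X in (_ <= X)%N]big_seq /=.
by apply: leq_sum => a aA; rewrite mul1n leFc.
Qed.

Section BoundedDegree.
Variable Y : {fset nat} -> Prop.
Hypothesis complexY : is_complex Y.
Hypothesis degY : bounded_degree Y.

Lemma simplex_card_bounded : exists D, forall t, Y t -> (#|` t| <= D)%N.
Proof.
have [[Yne Ycl] [D degD]] := (complexY, degY); exists D => t Yt.
have /fset0Pn [v vt] := Yne _ Yt.
rewrite -(size_map (fun w => [fset v; w])); apply: (degD v).
  rewrite map_inj_in_uniq // => w w' _ _ E.
  have /fset2P [wv|//] : w \in [fset v; w'] by rewrite -E !inE eqxx orbT.
  by have /fset2P [->|->] : w' \in [fset v; w] by rewrite E !inE eqxx orbT.
move=> s /mapP [w wt ->]; split; last by rewrite !inE eqxx.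
apply: (Ycl t) => //; last by apply/fset0Pn; exists v; rewrite !inE eqxx.
by apply/fsubsetP => x /fset2P [] ->.
Qed.

Lemma vertex_star_finite v :
  exists S : {fset nat}, forall t, Y t -> v \in t -> t `<=` S.
Proof.
have [D degD] := degY.
pose P n := `[< exists l : seq {fset nat},
  [/\ uniq l, size l = n & forall s, s \in l -> Y s /\ v \in s] >].
have exP : exists n, P n by exists 0%N; apply/asboolP; exists [::].
have leD n : P n -> (n <= D)%N.
  by move=> /asboolP [l [ul <- starl]]; apply: (degD v).
have [n /asboolP [l [ul <- starl]] maxl] := ex_maxnP exP leD.
exists (\bigcup_(s <- l) s) => t Yt vt; apply: bigfcup_sup => //.
apply/negPn/negP => tl; suff /maxl : P (size l).+1 by rewrite ltnn.
apply/asboolP; exists (t :: l); split => //= [|s]; first by rewrite tl.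
by rewrite inE => /predU1P [->|/starl].
Qed.

Lemma star_finite (A : seq nat) :
  exists S : {fset nat}, forall t, Y t -> has (mem t) A -> t `<=` S.
Proof.
elim: A => [|v A [S starS]]; first by exists fset0.
have [Sv starSv] := vertex_star_finite v.
exists (Sv `|` S) => t Yt /= /orP [vt|tA].
  exact: fsubset_trans (starSv t Yt vt) (fsubsetUl _ _).
exact: fsubset_trans (starS t Yt tA) (fsubsetUr _ _).
Qed.

Lemma subcomplex_card_bounded :
  exists D, forall W, subcomplex W Y -> (#|` W| <= nverts W * D)%N.
Proof.
have [D degD] := degY; exists D => W [[Wne Wcl] WY].
pose star u := [fset s in W | u `<=` s].
apply: (@leq_trans #|` \bigcup_(u <- [fset s in W | is_vertex s]) star u|).
  apply/fsubset_leq_card/fsubsetP => s sW; apply/bigfcupP.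
  have /fset0Pn [v vs] := Wne _ sW.
  have vsub : [fset v] `<=` s by rewrite fsub1set.
  exists [fset v]; last by rewrite !inE sW vsub.
  rewrite !inE /is_vertex cardfs1 eqxx !andbT /=.
  by apply: (Wcl s) => //; apply/fset0Pn; exists v; rewrite inE.
rewrite /nverts; apply: card_bigfcup_le => u.
rewrite !inE /is_vertex => /andP [_ /cardfs1P [v ->]].
apply: (degD v); first exact: fset_uniq.
move=> s; rewrite !inE fsub1set => /andP [sW vs]; split => //; exact: WY.
Qed.

End BoundedDegree.

Section Realisation.
Variable R : realType.
Local Open Scope ring_scope.

Lemma in_simplex_neq0 (t : {fset nat}) (y : nat -> R) :
  in_simplex t y -> t != fset0.
Proof.
move=> [_ [_ sum1]]; apply/eqP => t0; move: sum1.
by rewrite t0 big_seq_fset0 => /eqP; rewrite eq_sym oner_eq0.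
Qed.

Lemma in_simplex_le1 (t : {fset nat}) (y : nat -> R) i :
  in_simplex t y -> y i <= 1.
Proof.
move=> [y_ge0 [y_out sum1]]; have [it|/y_out -> //] := boolP (i \in t).
by rewrite -sum1 (big_rem i) //= lerDl sumr_ge0.
Qed.

Lemma in_simplex_coord_ge (t : {fset nat}) (y : nat -> R) n :
  in_simplex t y -> (#|` t| <= n)%N -> exists2 j, j \in t & n%:R^-1 <= y j.
Proof.
move=> ty tn; apply: contrapT => small.
have lt_inv j : j \in t -> y j < n%:R^-1.
  by move=> jt; rewrite ltNge; apply/negP => le; apply: small; exists j.
have /fset0Pn [j0 j0t] := in_simplex_neq0 ty.
have n_gt0 : (0 < n)%N.
  by apply: leq_trans tn; rewrite cardfs_gt0; apply/fset0Pn; exists j0.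
have : \sum_(j <- t) y j < \sum_(j <- t) n%:R^-1.
  rewrite big_seq [ltRHS]big_seq.
  by apply: ltr_sum => [|j jt]; [apply/hasP; exists j0|rewrite lt_inv].
have -> : \sum_(j <- t) n%:R^-1 = #|` t|%:R * n%:R^-1 :> R.
  by rewrite -sum1_size natr_sum big_distrl /=; apply: eq_bigr => j _; rewrite mul1r.
by rewrite ty.2.2 ltr_pdivlMr ?ltr0n // mul1r ltr_nat ltnNge tn.
Qed.

Lemma in_simplex_support (t : {fset nat}) (y : nat -> R) : in_simplex t y ->
  exists u, [/\ u `<=` t, u != fset0, in_simplex u y &
    forall j, j \in u -> y j != 0].
Proof.
move=> [y_ge0 [y_out sum1]]; exists [fset j in t | y j != 0].
have sum_supp : \sum_(j <- [fset j in t | y j != 0]) y j = \sum_(j <- t) y j.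
  apply: big_fset_incl => [|j jt]; first exact: fset_sub.
  by rewrite !inE jt => /negPn/eqP.
have uy : in_simplex [fset j in t | y j != 0] y.
  split=> //; split; last by rewrite sum_supp.
  by move=> j; rewrite !inE negb_and negbK => /orP [/y_out|/eqP].
split=> //; [exact: fset_sub|exact: in_simplex_neq0 uy|].
by move=> j; rewrite !inE => /andP [].
Qed.

(* f y has a coordinate >= 1/(D+1); by continuity it is nonzero in f x, so the
   carrier of f y lies in the star of the carrier of f x. *)
Lemma locally_finite_support (Y : {fset nat} -> Prop) (A : (nat -> R) -> Prop)
    (f : (nat -> R) -> nat -> R) (x : nat -> R) :
  is_complex Y -> bounded_degree Y -> cont_on A f ->
  (forall x, A x -> realis Y (f x)) -> A x ->
  exists V : {fset nat}, exists2 d : R, 0 < d &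
    forall y, A y -> (forall i, `|x i - y i| < d) ->
      forall j, f y j != 0 -> j \in V.
Proof.
move=> complexY degY cf fY Ax.
have [D leD] := simplex_card_bounded complexY degY.
have [t0 [Yt0 fx_t0]] := fY x Ax.
have [S starS] := star_finite degY t0.
have eps_gt0 : 0 < D.+1%:R^-1 :> R by rewrite invr_gt0 ltr0n.
have [d d_gt0 near_fx] := cf x Ax _ eps_gt0.
exists S, d => // y Ay xy j fyj.
have [t [Yt fy_t]] := fY y Ay.
have [j0 j0t big_j0] := in_simplex_coord_ge fy_t (leqW (leD t Yt)).
suff j0t0 : j0 \in t0.
  apply: (fsubsetP (starS t Yt _)); first by apply/hasP; exists j0.
  by apply/negPn/negP => /fy_t.2.1 /eqP; rewrite (negPf fyj).
apply/negPn/negP => /fx_t0.2.1 fxj0.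
have := near_fx y Ay xy j0; rewrite fxj0 sub0r normrN ger0_norm ?fy_t.1 //.
by rewrite ltNge big_j0.
Qed.

Local Open Scope classical_set_scope.

Lemma open_box (x : nat -> R) (S : seq nat) (d : R) :
  open [set y : {ptws nat -> R} | forall i, i \in S -> `|x i - y i| < d].
Proof.
elim: S => [|a S IH].
  rewrite (_ : [set y : {ptws nat -> R} | _] = setT); first exact: openT.
  by apply/seteqP; split => // y _ i.
rewrite (_ : [set y : {ptws nat -> R} | _] =
  (fun y : {ptws nat -> R} => y a) @^-1` ball (x a) d `&`
  [set y : {ptws nat -> R} | forall i, i \in S -> `|x i - y i| < d]).
  apply: openI => //; apply: open_comp; last exact: ball_open.
  by move=> y _; exact: proj_continuous.
apply/seteqP; split => y /=; rewrite -ball_normE /=.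
  by move=> near_x; split => [|i iS]; apply: near_x; rewrite inE ?eqxx ?iS ?orbT.
by move=> [near_a near_S] i /predU1P [->|/near_S].
Qed.

Lemma continuous_coord_sum (S : seq nat) :
  continuous (fun y : {ptws nat -> R} => \sum_(i <- S) y i).
Proof.
elim: S => [|i S IH].
  rewrite (_ : (fun y : {ptws nat -> R} => _) = fun=> 0); first exact: cst_continuous.
  by apply/funext => y; rewrite big_nil.
rewrite (_ : (fun y : {ptws nat -> R} => _) = fun y => y i + \sum_(j <- S) y j).
  by move=> y; apply: continuousD (IH y); exact: proj_continuous.
by apply/funext => y; rewrite big_cons.
Qed.

Lemma compact_simplex (s : {fset nat}) :
  compact [set y : {ptws nat -> R} | in_simplex s y].
Proof.
pose coord_range i : set R := if i \in s then `[0, 1] else [set 0].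
rewrite (_ : [set y : {ptws nat -> R} | _] =
  [set y : {ptws nat -> R} | forall i, coord_range i (y i)] `&`
  [set y : {ptws nat -> R} | \sum_(i <- s) y i = 1]).
  apply: compact_closedI.
    apply: (@tychonoff nat (fun=> R) coord_range) => i.
    by rewrite /coord_range; case: ifP => _; [exact: segment_compact|exact: compact_set1].
  apply: ((continuous_closedP _).1 (@continuous_coord_sum s) [set x | x = 1]).
  exact: closed_eq.
apply/seteqP; split => y.
  move=> sy; split => [i|]; last exact: sy.2.2.
  rewrite /coord_range; case: ifP => [_|/negbT /sy.2.1 //].
  by rewrite /= in_itv /= sy.1 (in_simplex_le1 _ sy).
move=> [range_y sum1]; split; [|split] => // i; have := range_y i; rewrite /coord_range.
  by case: ifP => _ /=; [rewrite in_itv /= => /andP []|move=> ->].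
by move=> + /negbTE nis; rewrite nis => ->.
Qed.

Lemma simplex_image_support_finite (Y : {fset nat} -> Prop) (A : (nat -> R) -> Prop)
    (f : (nat -> R) -> nat -> R) (s : {fset nat}) :
  is_complex Y -> bounded_degree Y -> cont_on A f ->
  (forall x, A x -> realis Y (f x)) -> (forall y, in_simplex s y -> A y) ->
  exists V : {fset nat},
    forall y, in_simplex s y -> forall j, f y j != 0 -> j \in V.
Proof.
move=> complexY degY cf fY sA.
pose box (x : nat -> R) d :=
  [set y : {ptws nat -> R} | forall i, i \in s -> `|x i - y i| < d].
(* Indexing the cover by (centre, radius, support bound) lets the finite
   subcover carry its own support bounds. *)
pose good (p : (nat -> R) * R * {fset nat}) := in_simplex s p.1.1 /\
  forall y, in_simplex s y -> box p.1.1 p.1.2 y -> forall j, f y j != 0 -> j \in p.2.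
have cover_simplex : [set y : {ptws nat -> R} | in_simplex s y] `<=`
    cover good (fun p => box p.1.1 p.1.2).
  move=> x sx.
  have [V [d d_gt0 suppV]] := locally_finite_support complexY degY cf fY (sA x sx).
  exists (x, d, V); last by move=> i _ /=; rewrite subrr normr0.
  split=> // y sy box_y; apply: suppV; first exact: sA.
  move=> i; have [/box_y //|/negbTE nis] := boolP (i \in s).
  by rewrite (sx.2.1 i) ?(sy.2.1 i) ?nis // subrr normr0.
have open_good p : good p -> open (box p.1.1 p.1.2) by move=> _; exact: open_box.
have : cover_compact [set y : {ptws nat -> R} | in_simplex s y].
  by have := compact_simplex (s := s); rewrite compact_cover.
move=> /(_ _ good _ open_good cover_simplex) [G Ggood coverG].
exists (\bigcup_(p <- G) p.2) => y sy j fyj.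
have [p pG box_y] := coverG y sy.
have /set_mem [_ suppG] := Ggood p pG.
by apply/bigfcupP; exists p; [rewrite pG | exact: suppG fyj].
Qed.

Lemma image_in_finite_subcomplex (Y : {fset nat} -> Prop) (Z : {fset {fset nat}})
    (f : (nat -> R) -> nat -> R) :
  is_complex Y -> bounded_degree Y -> cont_on (realis (fun s => s \in Z)) f ->
  (forall x, realis (fun s => s \in Z) x -> realis Y (f x)) ->
  exists W, subcomplex W Y /\
    forall x, realis (fun s => s \in Z) x -> realis (fun s => s \in W) (f x).
Proof.
move=> complexY degY cf fY.
have /choice [supp suppP] : forall s, exists V : {fset nat}, s \in Z ->
    forall y, in_simplex s y -> forall j, f y j != 0 -> j \in V.
  move=> s; have [sZ|] := boolP (s \in Z); last by exists fset0.
  have [V suppV] := simplex_image_support_finite complexY degY cf fY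
    (fun y sy => ex_intro _ s (conj sZ sy)).
  by exists V.
have [Yne Ycl] := complexY.
pose V := \bigcup_(s <- Z) supp s.
exists [fset u in fpowerset V | `[< Y u >]]; split.
  split=> [|s]; last by rewrite !inE => /andP [_ /asboolP].
  split=> [s|s u]; first by rewrite !inE => /andP [_ /asboolP /Yne].
  rewrite !inE !fpowersetE => /andP [sV /asboolP Ys] us u0.
  by rewrite (fsubset_trans us sV); apply/asboolP; exact: (Ycl s).
move=> x [s [sZ sx]]; have [t [Yt tfx]] := fY x (ex_intro _ s (conj sZ sx)).
have [u [ut u0 ufx fx_neq0]] := in_simplex_support tfx.
exists u; split=> //; rewrite !inE fpowersetE; apply/andP; split.
  apply/fsubsetP => j uj; apply/bigfcupP; exists s; first by rewrite sZ.
  exact: (suppP s sZ x sx j (fx_neq0 j uj)).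
by apply/asboolP; exact: (Ycl t).
Qed.

Lemma cont_on_comp {J : Type} (A B : (nat -> R) -> Prop)
    (f : (nat -> R) -> nat -> R) (g : (nat -> R) -> J -> R) :
  cont_on A f -> cont_on B g -> (forall x, A x -> B (f x)) ->
  cont_on A (fun x => g (f x)).
Proof.
move=> cf cg fAB x Ax e e_gt0.
have [d1 d1_gt0 near_g] := cg (f x) (fAB x Ax) e e_gt0.
have [d2 d2_gt0 near_f] := cf x Ax d1 d1_gt0.
by exists d2 => // y Ay xy j; apply: near_g; [exact: fAB|exact: near_f].
Qed.

Lemma cont_on_cst {J : Type} (A : (nat -> R) -> Prop) (c : J -> R) :
  cont_on A (fun=> c).
Proof. by move=> x _ e e_gt0; exists 1 => // y _ _ j; rewrite subrr normr0. Qed.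

Section Overlap.
Variables (q : nat) (Z : {fset {fset nat}}).

Lemma nb_cover_le_card (g : (nat -> R) -> 'I_q -> R) z : (nb_cover Z g z <= #|` Z|)%N.
Proof. exact/fsubset_leq_card/fset_sub. Qed.

Lemma nb_cover_le_sOv (g : (nat -> R) -> 'I_q -> R) z : (nb_cover Z g z <= sOv Z g)%N.
Proof.
apply: nat_max_ge; last by exists z.
by exists #|` Z| => _ [z' ->]; exact: nb_cover_le_card.
Qed.

Lemma sOv_le_card (g : (nat -> R) -> 'I_q -> R) : (sOv Z g <= #|` Z|)%N.
Proof.
rewrite /sOv; set P := (X in nat_max X); case: (nat_max_cases P) => [->//|[z ->]].
exact: nb_cover_le_card.
Qed.

Lemma sTO_le_card : (sTO R q Z <= #|` Z|)%N.
Proof.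
rewrite /sTO; set P := (X in nat_min X); case: (nat_min_cases P) => [->//|[g [_ ->]]].
exact: sOv_le_card.
Qed.

Lemma sTO_le_sOv (g : (nat -> R) -> 'I_q -> R) :
  cont_on (realis (fun s => s \in Z)) g -> (sTO R q Z <= sOv Z g)%N.
Proof. by move=> cg; apply: nat_min_le; exists g. Qed.

Lemma sTO_attained : exists2 g : (nat -> R) -> 'I_q -> R,
  cont_on (realis (fun s => s \in Z)) g & sTO R q Z = sOv Z g.
Proof.
rewrite /sTO; set P := (X in nat_min X).
have [|g [cg ->]] := nat_min_mem (P := P); last by exists g.
pose g0 : (nat -> R) -> 'I_q -> R := fun=> fun=> 0.
by exists (sOv Z g0), g0; split; first exact: cont_on_cst.
Qed.

End Overlap.

Section CoarseConstruction.
Variables (k : nat) (Z W : {fset {fset nat}}) (Y : {fset nat} -> Prop).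
Variable f : (nat -> R) -> nat -> R.
Hypothesis ccf : coarse_construction k Z Y f.
Hypothesis WY : forall t, t \in W -> Y t.
Hypothesis fZW :
  forall x, realis (fun s => s \in Z) x -> realis (fun s => s \in W) (f x).

Lemma nb_cover_comp_le q (g : (nat -> R) -> 'I_q -> R) z :
  (nb_cover Z (fun x => g (f x)) z <= k * nb_cover W g z)%N.
Proof.
have [_ [_ [_ fewZ]]] := ccf.
pose pre t := [fset s in Z | `[< exists x, in_simplex s x /\ in_simplex t (f x) >]].
pose hit := [fset t in W | `[< exists x, in_simplex t x /\ g x = z >]].
apply: (@leq_trans #|` \bigcup_(t <- hit) pre t|); last first.
  rewrite mulnC; apply: card_bigfcup_le => t.
  by rewrite !inE => /andP [tW _]; exact: fewZ (WY tW).
apply/fsubset_leq_card/fsubsetP => s; rewrite !inE => /andP [sZ /asboolP [x [sx gfx]]].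
have [t [tW tfx]] := fZW (ex_intro _ s (conj sZ sx)).
apply/bigfcupP; exists t; first by rewrite !inE tW andbT; apply/asboolP; exists (f x).
by rewrite !inE sZ /=; apply/asboolP; exists x.
Qed.

Lemma sOv_comp_le q (g : (nat -> R) -> 'I_q -> R) :
  (sOv Z (fun x => g (f x)) <= k * sOv W g)%N.
Proof.
rewrite {1}/sOv; set P := (X in nat_max X); case: (nat_max_cases P) => [->//|[z ->]].
by apply: leq_trans (nb_cover_comp_le g z) _; rewrite leq_mul2l nb_cover_le_sOv orbT.
Qed.

Lemma sTO_coarse_le q : (sTO R q Z <= k * sTO R q W)%N.
Proof.
have [g cg ->] := sTO_attained q W.
exact: leq_trans (sTO_le_sOv (cont_on_comp ccf.2.1 cg fZW)) (sOv_comp_le g).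
Qed.

End CoarseConstruction.

Lemma min_con_vol_attained k Z Y (f0 : (nat -> R) -> nat -> R) :
  is_complex Y -> bounded_degree Y -> coarse_construction k Z Y f0 ->
  exists (f : (nat -> R) -> nat -> R) W, [/\ coarse_construction k Z Y f, subcomplex W Y,
    forall x, realis (fun s => s \in Z) x -> realis (fun s => s \in W) (f x) &
    nverts W = min_con_vol R k Z Y].
Proof.
move=> complexY degY ccf0; rewrite /min_con_vol; set P := (X in nat_min X).
have [|f [ccf ->]] := nat_min_mem (P := P); first by exists (volume Z Y f0), f0.
rewrite /volume; set Q := (X in nat_min X).
have [|W [WY [fZW ->]]] := nat_min_mem (P := Q); last by exists f, W.
have [W [WY fZW]] := image_in_finite_subcomplex complexY degY ccf.2.1 ccf.1.
by exists (nverts W), W.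
Qed.

Lemma sTO_le_sTOX q (Y : {fset nat} -> Prop) m W :
  bounded_degree Y -> subcomplex W Y -> (nverts W <= m)%N ->
  (sTO R q W <= sTOX R q Y m)%N.
Proof.
move=> degY WY Wm; apply: nat_max_ge; last by exists W.
have [D cardD] := subcomplex_card_bounded degY.
exists (m * D)%N => _ [W' [W'Y [W'm ->]]].
apply: leq_trans (sTO_le_card _ _) (leq_trans (cardD _ W'Y) _).
by rewrite leq_mul2r W'm orbT.
Qed.

Lemma con_finite_spec k (X Y : {fset nat} -> Prop) r Z :
  con R k X Y r <> None -> subcomplex Z X -> (nverts Z <= r)%N ->
  (exists f : (nat -> R) -> nat -> R, coarse_construction k Z Y f) /\
  (min_con_vol R k Z Y <= odflt 0 (con R k X Y r))%N.
Proof.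
rewrite /con; case: asboolP => [[constr bdd] _|//] ZX Zr.
by split; [exact: constr|apply: nat_max_ge bdd _; exists Z].
Qed.

End Realisation.

Unset Implicit Arguments.

Theorem theorem1p22 (R : realType) (X Y : {fset nat} -> Prop) (k : nat) :
  bd_complex X -> bd_complex Y ->
  (forall r : nat, con R k X Y r <> None) ->
  forall q : nat, (1 <= q)%N -> forall r : nat,
    (sTOX R q X r <= k * sTOX R q Y (odflt 0%N (con R k X Y r)))%N.
Proof.
move=> _ [complexY degY] con_finite q _ r.
rewrite {1}/sTOX; set P := (X in nat_max X); case: (nat_max_cases P) => [->//|].
move=> [Z [ZX [Zr ->]]]; have [[f0 ccf0] vol_le] := con_finite_spec (con_finite r) ZX Zr.
have [f [W [ccf WY fZW volW]]] := min_con_vol_attained complexY degY ccf0.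
apply: leq_trans (sTO_coarse_le ccf WY.2 fZW q) _.
by rewrite leq_mul2l sTO_le_sTOX ?orbT // volW.
Qed.
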